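(* Let $q\in\mathbb C_p$ with $|1-q|_p<p^{-1/(p-1)}$ ($p$ an odd prime). For $m\in\mathbb Z_+$ and $r\in\mathbb N$ with $m\le r$, $$\binom rm_q q^{\binom m2-rm}=\frac{1}{[m]_q!}\sum_{k=0}^mq^{-rm}S_1(m-1,k;q)(-1)^k[r]_q^{m-k}.$$
   Context: $[x]_q=\frac{1-q^x}{1-q}$; $[m]_q!=[m]_q\cdots[1]_q$, $[0]_q!=1$; $\binom rm_q=\frac{[r]_q!}{[m]_q![r-m]_q!}$. The $q$-Stirling numbers of the first kind are defined by $\prod_{k=1}^N(1+[k]_qz)=\sum_{k\ge0}S_1(N,k;q)z^k$ for $N\ge-1$ (empty product $=1$; $S_1(N,k;q)=0$ for $k>N$; in particular $S_1(-1,0;q)=1$). *)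

From HB Require Import structures.
From mathcomp Require Import all_boot all_order all_algebra.
From mathcomp Require Import all_classical all_reals.
From mathcomp Require Import exp.
Set Implicit Arguments. Unset Strict Implicit. Unset Printing Implicit Defensive.
Import Order.TTheory GRing.Theory Num.Theory.
Local Open Scope ring_scope.

Definition qint {F : fieldType} (q : F) (x : nat) : F :=
  if q == 1 then x%:R else (1 - q ^+ x) / (1 - q).

Definition qfact {F : fieldType} (q : F) (m : nat) : F :=
  \prod_(1 <= k < m.+1) qint q k.

Definition qbinom {F : fieldType} (q : F) (r m : nat) : F :=
  qfact q r / (qfact q m * qfact q (r - m)).

(* Here N : nat covers N >= 0; the case N = -1
   of the paper is not needed (m >= 1 below gives N = m - 1 >= 0). *)
Definition qStirling1 {F : fieldType} (N k : nat) (q : F) : F :=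
  (\prod_(1 <= j < N.+1) (1 + (qint q j) *: 'X)) `_ k.

Definition padic_abs (R : realType) (F : fieldType) (p : nat) (abs : F -> R) : Prop :=
  [/\ forall x, 0 <= abs x,
      forall x, abs x = 0 <-> x = 0,
      forall x y, abs (x * y) = abs x * abs y,
      forall x y, abs (x + y) <= Num.max (abs x) (abs y)
    & abs p%:R = (p%:R)^-1].

(* Evaluating the generating polynomial of the q-Stirling numbers at -1/x
   gives \sum_k S_1(m-1,k;q) (-1)^k x^(m-k) = \prod_(j < m) (x - [j]_q).  At
   x = [r]_q the factors are [r]_q - [j]_q = q^j [r-j]_q, so the right-hand
   side is q^(C(m,2) - rm) [r]_q [r-1]_q ... [r-m+1]_q / [m]_q!, which is the
   left-hand side.  This only needs q != 0 and [j]_q != 0 for j > 0, and both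
   come from the p-adic bound: the absolute value forces characteristic 0, and
   |q - 1|^(p-1) < 1/p excludes nontrivial roots of unity q, because for l
   prime and y != 0, (1 + y)^l - 1 = y (l + \sum_(i >= 2) C(l,i) y^(i-1)) and
   the term l strictly dominates the sum in absolute value. *)

From HB Require Import structures.
From mathcomp Require Import all_boot all_order all_algebra.
From mathcomp Require Import all_classical all_reals.
From mathcomp Require Import exp.
From mathcomp Require Import ring lra zify.
Set Implicit Arguments. Unset Strict Implicit. Unset Printing Implicit Defensive.
Import Order.TTheory GRing.Theory Num.Theory.
Local Open Scope ring_scope.

Section QCalculus.
Variables (F : fieldType) (q : F).

Lemma qint0 : qint q 0 = 0.
Proof. by rewrite /qint expr0 subrr mul0r; case: ifP. Qed.

Lemma qint_subn r j : (j <= r)%N ->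
  qint q r - qint q j = q ^+ j * qint q (r - j).
Proof.
move=> le_jr; rewrite /qint; case: eqP => [->|/eqP q_neq1].
  by rewrite expr1n mul1r natrB.
have q1_neq0 : 1 - q != 0 by rewrite subr_eq0 eq_sym.
rewrite -{1}(subnKC le_jr) exprD.
by field.
Qed.

Lemma qfactS n : qfact q n.+1 = qfact q n * qint q n.+1.
Proof. by rewrite /qfact big_nat_recr. Qed.

Lemma qfact_falling r m : (m <= r)%N ->
  qfact q r = (\prod_(i < m) qint q (r - i)) * qfact q (r - m).
Proof.
elim: m => [|m IHm] lt_mr; first by rewrite big_ord0 mul1r subn0.
rewrite IHm ?(ltnW lt_mr) // big_ord_recr /= -mulrA; congr (_ * _).
by rewrite -(subnSK lt_mr) qfactS mulrC.
Qed.

Lemma qfact_neq0 n : (forall j, (0 < j)%N -> qint q j != 0) -> qfact q n != 0.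
Proof.
move=> qint_neq0; rewrite /qfact prodf_seq_neq0.
by apply/allP => j; rewrite mem_index_iota => /andP[/qint_neq0].
Qed.

Let gen_poly N : {poly F} := \prod_(1 <= j < N.+1) (1 + qint q j *: 'X).

Let size_gen_poly N : (size (gen_poly N) <= N.+1)%N.
Proof.
elim: N => [|N IHN]; first by rewrite /gen_poly big_geq ?size_poly1.
rewrite /gen_poly big_nat_recr //=; apply: leq_trans (size_polyMleq _ _) _.
have size_factor : (size (1 + qint q N.+1 *: 'X : {poly F})%R <= 2)%N.
  apply: leq_trans (size_polyD _ _) _; rewrite geq_max size_poly1.
  by apply: leq_trans (size_scale_leq _ _) _; rewrite size_polyX.
move: IHN size_factor; rewrite -/(gen_poly N); lia.
Qed.

Lemma qStirling1_sum N x : x != 0 ->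
  \sum_(k < N.+2) qStirling1 N k q * (-1) ^+ k * x ^+ (N.+1 - k)
  = \prod_(j < N.+1) (x - qint q j).
Proof.
move=> x_neq0.
transitivity (x ^+ N.+1 * (gen_poly N).[- x^-1]).
  rewrite (horner_coef_wide _ (leqW (size_gen_poly N))) mulr_sumr.
  apply: eq_bigr => -[k lt_kN2] _ /=.
  rewrite /qStirling1 -/(gen_poly N) -[in RHS](subnK (_ : k <= N.+1)%N) //.
  rewrite exprD (exprNn x^-1) exprVn; field; exact: expf_neq0.
rewrite /gen_poly horner_prod big_ord_recl qint0 subr0 exprS -mulrA.
congr (_ * _).
rewrite big_add1 /= big_mkord.
have -> : x ^+ N = \prod_(i < N) x by rewrite prodr_const card_ord.
rewrite -big_split /=; apply: eq_bigr => j _.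
by rewrite !hornerE; field.
Qed.

Lemma qbinom_qStirling1 r m : q != 0 ->
  (forall j, (0 < j)%N -> qint q j != 0) -> (0 < m)%N -> (m <= r)%N ->
  qbinom q r m * q ^ ('C(m, 2)%:Z - (r * m)%:Z)
  = (qfact q m)^-1 *
    \sum_(0 <= k < m.+1)
      q ^- (r * m) * qStirling1 m.-1 k q * (-1) ^+ k * qint q r ^+ (m - k).
Proof.
move=> q_neq0 qint_neq0; case: m => // n _ le_mr.
have qint_r_neq0 : qint q r != 0 by apply: qint_neq0; apply: leq_trans le_mr.
under eq_bigr do rewrite -!mulrA.
rewrite -mulr_sumr big_mkord.
under eq_bigr do rewrite mulrA.
rewrite qStirling1_sum //.
rewrite (eq_bigr (fun j : 'I_n.+1 => q ^+ j * qint q (r - j))); last first.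
  by move=> j _; rewrite qint_subn // ltnW // (leq_trans (ltn_ord j)).
rewrite big_split /= prodrXr -(big_mkord xpredT id) -bin2_sum.
rewrite /qbinom (qfact_falling le_mr) expfzDr // -exprnN -exprnP.
by field; rewrite expf_neq0 ?qfact_neq0.
Qed.

End QCalculus.

Section PadicAbs.
Variables (R : realType) (F : fieldType) (p : nat) (abs : F -> R).
Hypotheses (abs_padic : padic_abs p abs) (p_prime : prime p).

Let abs_ge0 x : 0 <= abs x. Proof. by case: abs_padic. Qed.
Let abs_eq0 x : abs x = 0 <-> x = 0. Proof. by case: abs_padic. Qed.
Let absM x y : abs (x * y) = abs x * abs y. Proof. by case: abs_padic. Qed.
Let absD_le_max x y : abs (x + y) <= Num.max (abs x) (abs y).
Proof. by case: abs_padic. Qed.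
Let abs_p : abs p%:R = p%:R^-1. Proof. by case: abs_padic. Qed.

Lemma abs0 : abs 0 = 0. Proof. exact/abs_eq0. Qed.

Lemma abs1 : abs 1 = 1.
Proof.
have abs1_neq0 : abs 1 != 0 by apply/eqP => /abs_eq0/eqP; rewrite oner_eq0.
by apply: (mulIf abs1_neq0); rewrite -absM !mul1r.
Qed.

Lemma absN x : abs (- x) = abs x.
Proof.
have absN1 : abs (-1) = 1.
  have : abs (-1) * abs (-1) = 1 by rewrite -absM mulrNN mulr1 abs1.
  have := abs_ge0 (-1); nra.
by rewrite -mulN1r absM absN1 mul1r.
Qed.

Lemma absX x n : abs (x ^+ n) = abs x ^+ n.
Proof. by elim: n => [|n IHn]; rewrite ?abs1 // !exprS absM IHn. Qed.

Lemma absD_le x y c : abs x <= c -> abs y <= c -> abs (x + y) <= c.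
Proof.
by move=> x_le y_le; apply: le_trans (absD_le_max x y) _; rewrite ge_max x_le.
Qed.

Lemma absD_lt x y c : abs x < c -> abs y < c -> abs (x + y) < c.
Proof.
move=> x_lt y_lt; apply: le_lt_trans (absD_le_max x y) _.
by rewrite gt_max x_lt.
Qed.

Lemma abs_sum_le I (s : seq I) (f : I -> F) c : 0 <= c ->
  (forall i, abs (f i) <= c) -> abs (\sum_(i <- s) f i) <= c.
Proof.
move=> c_ge0 f_le; elim: s => [|i s IHs]; first by rewrite big_nil abs0.
by rewrite big_cons absD_le.
Qed.

Lemma abs_sum_lt I (s : seq I) (f : I -> F) c : 0 < c ->
  (forall i, abs (f i) < c) -> abs (\sum_(i <- s) f i) < c.
Proof.
move=> c_gt0 f_lt; elim: s => [|i s IHs]; first by rewrite big_nil abs0.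
by rewrite big_cons absD_lt.
Qed.

Lemma absD_dom x y : abs y < abs x -> abs (x + y) = abs x.
Proof.
move=> y_lt_x; apply/eqP; rewrite eq_le absD_le ?(ltW y_lt_x) //=.
have := absD_le_max (x + y) (- y); rewrite addrK absN le_max => /orP[] //.
by move=> /(lt_le_trans y_lt_x); rewrite ltxx.
Qed.

Lemma abs_natr_le1 n : abs n%:R <= 1.
Proof.
elim: n => [|n IHn]; first by rewrite abs0.
by rewrite -natr1 absD_le ?abs1.
Qed.

Lemma p_gt1 : 1 < p%:R :> R.
Proof. by rewrite ltr1n prime_gt1. Qed.

Lemma abs_p_gt0 : 0 < abs p%:R.
Proof. by rewrite abs_p invr_gt0 (lt_trans ltr01 p_gt1). Qed.

Lemma abs_p_lt1 : abs p%:R < 1.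
Proof. by rewrite abs_p invf_lt1 ?p_gt1 // (lt_trans ltr01 p_gt1). Qed.

Lemma abs_natr_coprime n : coprime n p -> abs n%:R = 1.
Proof.
case: n => [|n].
  by rewrite /coprime gcd0n => /eqP p1; move: p_prime; rewrite p1.
rewrite /coprime => /eqP gcd1; have [a _] := Bezoutl p (ltn0Sn n).
rewrite gcd1 => /dvdnP[k /(congr1 (GRing.natmul (1 : F)))].
rewrite !natrD !natrM => Bezout.
(* k (n + 1) = 1 + a p with |a p| < 1, and both factors have norm at most 1. *)
have : abs k%:R * abs n.+1%:R = 1.
  rewrite -absM -Bezout absD_dom abs1 // absM.
  by apply: le_lt_trans abs_p_lt1; rewrite ler_piMl ?abs_natr_le1.
have := abs_natr_le1 k; have := abs_natr_le1 n.+1.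
have := abs_ge0 k%:R; have := abs_ge0 n.+1%:R; nra.
Qed.

Lemma natr_neq0 n : (0 < n)%N -> n%:R != 0 :> F.
Proof.
move=> n_gt0; have [m coprime_pm ->] := pfactor_coprime p_prime n_gt0.
suff : abs (m * p ^ logn p n)%:R != 0 by apply: contraNneq => ->; rewrite abs0.
rewrite natrM natrX absM absX abs_natr_coprime 1?coprime_sym //.
by rewrite mul1r expf_eq0 gt_eqF ?abs_p_gt0 ?andbF.
Qed.

(* |x| < p^(-1/(p-1)), the bound of the theorem, stated without real powers. *)
Definition abs_small (x : F) := abs x ^+ p.-1 < p%:R^-1.

Lemma abs_small_lt1 x : abs_small x -> abs x < 1.
Proof.
rewrite /abs_small !ltNge; apply: contraNN => /(exprn_ege1 p.-1).
by apply: le_trans; rewrite -abs_p ltW ?abs_p_lt1.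
Qed.

Lemma abs_small_le x y : abs x <= abs y -> abs_small y -> abs_small x.
Proof. by move=> xy; apply: le_lt_trans; rewrite lerXn2r ?nnegrE. Qed.

Lemma abs_binomial_term_lt l y i : prime l -> abs_small y -> (i < l.-1)%N ->
  abs ('C(l, i.+2)%:R * y ^+ i.+1) < abs l%:R.
Proof.
move=> l_prime small lt_il; have y_lt1 := abs_small_lt1 small.
have yi_lt1 : abs y ^+ i.+1 < 1 by rewrite exprn_ilt1.
rewrite absM absX; have [l_eq_p|l_neq_p] := eqVneq l p; last first.
  rewrite (@abs_natr_coprime l) ?prime_coprime ?dvdn_prime2 //.
  have := abs_natr_le1 'C(l, i.+2); have := abs_ge0 'C(l, i.+2)%:R.
  have := exprn_ge0 i.+1 (abs_ge0 y); nra.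
rewrite l_eq_p in lt_il *; have [lt_i2p|le_pi2] := ltnP i.+2 p.
  have /dvdnP[c ->] : (p %| 'C(p, i.+2))%N by apply: prime_dvd_bin => //; lia.
  rewrite natrM absM mulrAC mulrC gtr_pMr ?abs_p_gt0 //.
  have := abs_natr_le1 c; have := abs_ge0 c%:R.
  have := exprn_ge0 i.+1 (abs_ge0 y); nra.
have i2_eq_p : i.+2 = p by move: lt_il le_pi2; lia.
by rewrite i2_eq_p binn abs1 mul1r abs_p (_ : i.+1 = p.-1) // -i2_eq_p.
Qed.

Lemma abs_gt0 x : x != 0 -> 0 < abs x.
Proof.
move=> x_neq0; rewrite lt_def abs_ge0 andbT.
by apply: contra_neq x_neq0 => /abs_eq0.
Qed.

Lemma prime_root_eq0 l y : prime l -> abs_small y -> (y + 1) ^+ l = 1 -> y = 0.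
Proof.
move=> l_prime small; have [k l_eq] : exists k, l = k.+2.
  by exists l.-2; have := prime_gt1 l_prime; lia.
subst l; set S := \sum_(i < k.+1) 'C(k.+2, i.+2)%:R * y ^+ i.+1.
have expand : (y + 1) ^+ k.+2 - 1 = y * (k.+2%:R + S).
  rewrite exprD1n 2!big_ord_recl expr0 bin0 bin1 [1 + _]addrC addrK.
  rewrite mulrDr mulr_natr mulr_sumr; congr (_ + _).
  apply: eq_bigr => i _; rewrite !lift0.
  by rewrite -mulr_natr exprS; ring.
have S_lt : abs S < abs k.+2%:R.
  apply: abs_sum_lt => [|i]; first by rewrite abs_gt0 ?natr_neq0 ?prime_gt0.
  exact: abs_binomial_term_lt.
have lS_neq0 : k.+2%:R + S != 0.
  apply: contraTneq (abs_gt0 (natr_neq0 (prime_gt0 l_prime))) => lS_eq0.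
  by rewrite -(absD_dom S_lt) lS_eq0 abs0 ltxx.
move=> root_l; apply/eqP; move: expand; rewrite root_l subrr => /esym/eqP.
by rewrite mulf_eq0 (negbTE lS_neq0) orbF.
Qed.

Lemma abs_subX1_le x n : abs (x - 1) <= 1 -> abs (x ^+ n - 1) <= abs (x - 1).
Proof.
move=> x1_le1; have x_le1 : abs x <= 1 by rewrite -(subrK 1 x) absD_le ?abs1.
rewrite subrX1 absM ler_piMr // abs_sum_le // => i.
by rewrite absX exprn_ile1.
Qed.

Lemma unity_root_eq1 n x :
  (0 < n)%N -> abs_small (x - 1) -> x ^+ n = 1 -> x = 1.
Proof.
elim/ltn_ind: n x => n IHn x n_gt0 small xn_eq1.
have [n_le1|n_gt1] := leqP n 1.
  by move: xn_eq1; rewrite (_ : n = 1%N) ?expr1 //; lia.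
have l_prime := pdiv_prime n_gt1; set l := pdiv n in l_prime *.
have xl_eq1 : x ^+ l = 1.
  apply: (IHn (n %/ l)%N); first by rewrite ltn_Pdiv ?prime_gt1.
  - by rewrite divn_gt0 ?prime_gt0 // (dvdn_leq n_gt0 (pdiv_dvd n)).
  - exact: abs_small_le (abs_subX1_le _ (ltW (abs_small_lt1 small))) small.
  - by rewrite -exprM mulnC divnK ?pdiv_dvd.
apply/eqP; rewrite -subr_eq0; apply/eqP.
by apply: prime_root_eq0 l_prime small _; rewrite subrK.
Qed.

Lemma abs_small_sub1_neq0 x : abs_small (x - 1) -> x != 0.
Proof.
move/abs_small_lt1; apply: contraTneq => ->.
by rewrite sub0r absN abs1 ltxx.
Qed.

Lemma qint_neq0 q j : abs_small (q - 1) -> (0 < j)%N -> qint q j != 0.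
Proof.
move=> small j_gt0; rewrite /qint; have [_|q_neq1] := eqVneq q 1.
  exact: natr_neq0.
rewrite mulf_neq0 ?invr_eq0 ?subr_eq0 1?eq_sym //.
by apply: contra_neq q_neq1; apply: unity_root_eq1.
Qed.

End PadicAbs.

Lemma exprn_lt_powR_inv (R : realType) (a u : R) n :
  0 < a -> 0 <= u -> (0 < n)%N -> u < a `^ (- n%:R^-1) -> u ^+ n < a^-1.
Proof.
move=> a_gt0 u_ge0 n_gt0 lt_u; have -> : a^-1 = (a `^ (- n%:R^-1)) ^+ n.
  rewrite -powR_mulrn ?powR_ge0 // -powRrM mulNr mulVf ?pnatr_eq0 -?lt0n //.
  by rewrite powR_inv1 ?ltW.
by rewrite ltrXn2r -?lt0n ?powR_ge0.
Qed.

Theorem mainTheorem13 (R : realType) (F : closedFieldType) (p : nat)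
    (abs : F -> R) (q : F) (m r : nat) :
  prime p -> odd p ->
  padic_abs p abs ->
  abs (1 - q) < (p%:R : R) `^ (- (p.-1)%:R^-1) ->
  (0 < m)%N -> (m <= r)%N ->
  qbinom q r m * q ^ ('C(m, 2)%:Z - (r * m)%:Z)
  = (qfact q m)^-1 *
    \sum_(0 <= k < m.+1)
      q ^- (r * m) * qStirling1 m.-1 k q * (-1) ^+ k * qint q r ^+ (m - k).
Proof.
move=> p_prime _ abs_padic lt_q m_gt0 le_mr.
have small : abs_small p abs (q - 1).
  rewrite /abs_small -opprB (absN abs_padic); apply: exprn_lt_powR_inv => //.
  - by rewrite ltr0n prime_gt0.
  - by case: abs_padic.
  - by have := prime_gt1 p_prime; lia.
apply: qbinom_qStirling1 => //; first exact: abs_small_sub1_neq0 small.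
by move=> j; apply: (qint_neq0 abs_padic p_prime small).
Qed.
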